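(* Let $I,J\subseteq\mathbb{R}$ be non-degenerate, bounded, closed intervals. For every $n\in\omega$ let $x_n$ be points of the interior of $I$, pairwise distinct, and let $A_n\subseteq J$ be dense in $J$. Then there exists an increasing bijection $f\colon I\to J$ such that $f(x_n)\in A_n$ for all $n\in\omega$. *)

From Stdlib Require Import Reals.
Open Scope R_scope.

Definition Icc (a b : R) (x : R) : Prop := a <= x <= b.

Definition dense_in (A S : R -> Prop) : Prop :=
  forall y, S y -> forall eps, 0 < eps -> exists z, A z /\ Rabs (z - y) < eps.

Definition increasing_on (S : R -> Prop) (f : R -> R) : Prop :=
  forall x y, S x -> S y -> x < y -> f x < f y.

Definition bijection_on (S T : R -> Prop) (f : R -> R) : Prop :=
  (forall x, S x -> T (f x)) /\
  (forall x y, S x -> S y -> f x = f y -> x = y) /\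
  (forall y, T y -> exists x, S x /\ f x = y).

From Stdlib Require Import Reals Lra Lia ClassicalEpsilon.
Open Scope R_scope.

(* Start from the affine map of [a,b] onto [c,d], viewed as an increasing
   bijection of R, and correct it at x_0, x_1, ... in turn.  At stage n pick a
   window around x_n which avoids x_0, ..., x_(n-1) and such that both the
   window and its image have length at most 2^-n, and compose with a
   piecewise-linear increasing bijection of the image window moving F(x_n) onto
   a point of A_n.  Each stage moves the map by at most 2^-n and, the window
   being short, also moves its inverse by at most 2^-n.  Hence the maps converge
   uniformly to a continuous strictly increasing f with f(a) = c and f(b) = d,
   and f(x_m) is frozen from stage m+1 on. *)

Lemma Rabs_le_between z e : Rabs z <= e -> - e <= z <= e.
Proof.
  intros H. split.
  - pose proof (Rle_abs (- z)) as Hn. rewrite Rabs_Ropp in Hn. lra.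
  - pose proof (Rle_abs z). lra.
Qed.

Lemma Un_cv_between (u : nat -> R) l lo hi N :
  Un_cv u l -> (forall n, (N <= n)%nat -> lo <= u n <= hi) -> lo <= l <= hi.
Proof.
  intros Hcv Hb. split; apply Rnot_lt_le; intros Hl.
  - destruct (Hcv (lo - l)) as [M HM]; [lra|].
    specialize (HM (max N M) ltac:(lia)). specialize (Hb (max N M) ltac:(lia)).
    unfold Rdist in HM. apply Rabs_def2 in HM. lra.
  - destruct (Hcv (l - hi)) as [M HM]; [lra|].
    specialize (HM (max N M) ltac:(lia)). specialize (Hb (max N M) ltac:(lia)).
    unfold Rdist in HM. apply Rabs_def2 in HM. lra.
Qed.

Lemma dependent_choice_nat {X : Type} (P : X -> Prop) (step : nat -> X -> X -> Prop)
    (x0 : X) :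
  P x0 -> (forall n x, P x -> exists y, P y /\ step n x y) ->
  exists s : nat -> X, (forall n, P (s n)) /\ (forall n, step n (s n) (s (S n))).
Proof.
  intros H0 Hstep.
  assert (next : forall n (x : {x | P x}),
             {y : {y | P y} | step n (proj1_sig x) (proj1_sig y)}).
  { intros n [x Hx].
    destruct (constructive_indefinite_description _ (Hstep n x Hx)) as [y [Hy Hxy]].
    exact (exist _ (exist _ y Hy) Hxy). }
  pose (s := fix s n := match n with
                        | O => exist P x0 H0
                        | S k => proj1_sig (next k (s k))
                        end).
  exists (fun n => proj1_sig (s n)). split; intros n.
  - exact (proj2_sig (s n)).
  - exact (proj2_sig (next n (s n))).
Qed.

Lemma finite_pos_lower_bound (g : nat -> R) n :
  (forall m, (m < n)%nat -> 0 < g m) ->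
  exists r, 0 < r /\ forall m, (m < n)%nat -> r <= g m.
Proof.
  induction n as [|n IH]; intros Hg.
  - exists 1. split; [lra | intros; lia].
  - destruct IH as [r [Hr Hrg]]; [intros; apply Hg; lia|].
    exists (Rmin r (g n)). split; [apply Rmin_pos; auto; apply Hg; lia|].
    intros m Hm. destruct (Nat.eq_dec m n) as [->|Hne]; [apply Rmin_r|].
    eapply Rle_trans; [apply Rmin_l | apply Hrg; lia].
Qed.

Definition half_pow (n : nat) : R := (/ 2) ^ n.

Lemma half_pow_pos n : 0 < half_pow n.
Proof. unfold half_pow; apply pow_lt; lra. Qed.

Lemma half_pow_S n : half_pow (S n) = half_pow n / 2.
Proof. unfold half_pow; simpl; field. Qed.

Lemma half_pow_eventually_lt eps :
  0 < eps -> exists N, forall n, (N <= n)%nat -> half_pow n < eps.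
Proof.
  intros He. destruct (pow_lt_1_zero (/ 2)) with (y := eps) as [N HN]; auto.
  { rewrite Rabs_right; lra. }
  exists N. intros n Hn. specialize (HN n Hn). unfold half_pow.
  rewrite Rabs_right in HN; auto. left; apply pow_lt; lra.
Qed.

Lemma strict_increasing_increasing F : strict_increasing F -> increasing F.
Proof.
  intros H s t Hst. destruct (Rle_lt_or_eq_dec s t Hst) as [h | <-]; [left; auto | lra].
Qed.

Definition order_automorphism (F : R -> R) : Prop :=
  strict_increasing F /\ forall z, exists t, F t = z.

Lemma order_automorphism_comp g F :
  order_automorphism g -> order_automorphism F -> order_automorphism (fun t => g (F t)).
Proof.
  intros [Hg Hgs] [HF HFs]. split; [intros s t Hst; auto|].
  intros z. destruct (Hgs z) as [u <-]. destruct (HFs u) as [t <-]. exists t; reflexivity.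
Qed.

Lemma order_automorphism_modulus F t eps :
  order_automorphism F -> 0 < eps ->
  exists del, 0 < del /\ forall s, t - del <= s <= t + del -> F t - eps <= F s <= F t + eps.
Proof.
  intros [Hinc Hsur] He. pose proof (strict_increasing_increasing F Hinc) as Hmono.
  destruct (Hsur (F t - eps)) as [t1 H1]. destruct (Hsur (F t + eps)) as [t2 H2].
  assert (t1 < t).
  { apply Rnot_le_lt. intros h. pose proof (Hmono _ _ h). lra. }
  assert (t < t2).
  { apply Rnot_le_lt. intros h. pose proof (Hmono _ _ h). lra. }
  exists (Rmin (t - t1) (t2 - t)). split; [apply Rmin_pos; lra|].
  intros s Hs. pose proof (Rmin_l (t - t1) (t2 - t)). pose proof (Rmin_r (t - t1) (t2 - t)).
  rewrite <- H1, <- H2. split; apply Hmono; lra.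
Qed.

Lemma order_automorphism_continuous F : order_automorphism F -> continuity F.
Proof.
  intros HF t eps He.
  destruct (order_automorphism_modulus F t (eps / 2) HF) as [del [Hdel Hmod]]; [lra|].
  exists del. split; [lra|]. intros s [_ Hs]. simpl in *. unfold Rdist in *.
  apply Rabs_def2 in Hs. specialize (Hmod s ltac:(lra)). apply Rabs_def1; lra.
Qed.

Definition glue (m : R) (g h : R -> R) (t : R) : R := if Rle_dec t m then g t else h t.

Lemma glue_order_automorphism m g h :
  order_automorphism g -> order_automorphism h -> g m = h m ->
  order_automorphism (glue m g h).
Proof.
  intros [Hg Hgs] [Hh Hhs] Hm. unfold glue. split.
  - intros s t Hst.
    destruct (Rle_dec s m), (Rle_dec t m); auto; [|lra].
    apply Rle_lt_trans with (g m); [apply strict_increasing_increasing; auto|].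
    rewrite Hm. apply Hh; lra.
  - intros z. destruct (Rle_dec z (g m)) as [Hz|Hz].
    + destruct (Hgs z) as [t Ht]. exists t.
      destruct (Rle_dec t m) as [|Htm]; auto.
      pose proof (Hg m t ltac:(lra)). lra.
    + destruct (Hhs z) as [t Ht]. exists t.
      destruct (Rle_dec t m) as [Htm|]; auto.
      pose proof (strict_increasing_increasing h Hh t m Htm). lra.
Qed.

Definition affine (p P q Q : R) (t : R) : R := P + (Q - P) / (q - p) * (t - p).

Lemma affine_l p P q Q : affine p P q Q p = P.
Proof. unfold affine; ring. Qed.

Lemma affine_r p P q Q : p <> q -> affine p P q Q q = Q.
Proof. intros H. unfold affine; field. lra. Qed.

Lemma affine_order_automorphism p P q Q :
  p < q -> P < Q -> order_automorphism (affine p P q Q).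
Proof.
  intros Hpq HPQ. unfold affine.
  assert (Hk : 0 < (Q - P) / (q - p)) by (apply Rdiv_lt_0_compat; lra).
  split.
  - intros s t Hst. pose proof (Rmult_lt_compat_l _ (s - p) (t - p) Hk ltac:(lra)). lra.
  - intros z. exists (p + (z - P) * (q - p) / (Q - P)). field; lra.
Qed.

(* The piecewise-linear map fixing everything outside (L, U) and sending Y to y. *)
Definition bump (L Y y U : R) : R -> R :=
  glue L id (glue Y (affine L L Y y) (glue U (affine Y y U U) id)).

Lemma id_order_automorphism : order_automorphism id.
Proof. split; [intros s t H; exact H | intros z; exists z; reflexivity]. Qed.

Lemma bump_order_automorphism L Y y U :
  L < Y < U -> L < y < U -> order_automorphism (bump L Y y U).
Proof.
  intros HY Hy. unfold bump.
  apply glue_order_automorphism; [apply id_order_automorphism | |].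
  - apply glue_order_automorphism; [apply affine_order_automorphism; lra | |].
    + apply glue_order_automorphism;
        [apply affine_order_automorphism; lra | apply id_order_automorphism |].
      apply affine_r; lra.
    + unfold glue. destruct (Rle_dec Y U); [|lra].
      rewrite affine_r, affine_l; lra.
  - unfold glue. destruct (Rle_dec L Y); [|lra]. rewrite affine_l. reflexivity.
Qed.

Lemma bump_out L Y y U t : L < Y < U -> t <= L \/ U <= t -> bump L Y y U t = t.
Proof.
  intros HY Ht. unfold bump, glue.
  destruct (Rle_dec t L); [reflexivity|].
  destruct (Rle_dec t Y); [lra|].
  destruct (Rle_dec t U) as [HtU|]; [|reflexivity].
  replace t with U by lra. apply affine_r; lra.
Qed.

Lemma bump_center L Y y U : L < Y -> bump L Y y U Y = y.
Proof.
  intros HY. unfold bump, glue.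
  destruct (Rle_dec Y L); [lra|]. destruct (Rle_dec Y Y); [|lra].
  apply affine_r; lra.
Qed.

Definition agree_off (p q : R) (F G : R -> R) : Prop :=
  forall t, t <= p \/ q <= t -> G t = F t.

Lemma agree_off_close p q F G :
  p <= q -> increasing F -> increasing G -> agree_off p q F G ->
  forall u, Rabs (G u - F u) <= F q - F p.
Proof.
  intros Hpq HF HG Hag u. apply Rabs_le.
  pose proof (HF p q Hpq).
  destruct (Rle_dec u p) as [Hu|Hu]; [rewrite Hag; [lra | auto]|].
  destruct (Rle_dec q u) as [Hu'|Hu']; [rewrite Hag; [lra | auto]|].
  pose proof (HG p u ltac:(lra)). pose proof (HG u q ltac:(lra)).
  pose proof (HF p u ltac:(lra)). pose proof (HF u q ltac:(lra)).
  rewrite (Hag p), (Hag q) in * by lra. lra.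
Qed.

(* Since G maps (p, q) into [F p, F q], G u lies between the values of F at
   the points one window length away from u. *)
Lemma agree_off_shift p q F G :
  p <= q -> increasing F -> increasing G -> agree_off p q F G ->
  forall u, F (u - (q - p)) <= G u <= F (u + (q - p)).
Proof.
  intros Hpq HF HG Hag u.
  destruct (Rle_dec u p) as [Hu|Hu]; [rewrite Hag; [split; apply HF; lra | auto]|].
  destruct (Rle_dec q u) as [Hu'|Hu']; [rewrite Hag; [split; apply HF; lra | auto]|].
  pose proof (HG p u ltac:(lra)). pose proof (HG u q ltac:(lra)).
  pose proof (HF (u - (q - p)) p ltac:(lra)). pose proof (HF q (u + (q - p)) ltac:(lra)).
  rewrite (Hag p), (Hag q) in * by lra. lra.
Qed.

Lemma isolating_window F a b (xs : nat -> R) n x0 eps :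
  order_automorphism F -> a < x0 < b -> (forall m, (m < n)%nat -> xs m <> x0) ->
  0 < eps ->
  exists del, 0 < del /\ a <= x0 - del /\ x0 + del <= b /\ 2 * del <= eps /\
    F (x0 + del) - F (x0 - del) <= eps /\
    forall m, (m < n)%nat -> xs m <= x0 - del \/ x0 + del <= xs m.
Proof.
  intros HF Hx Hxs He.
  destruct (finite_pos_lower_bound (fun m => Rabs (xs m - x0)) n) as [r [Hr Hrm]].
  { intros m Hm. apply Rabs_pos_lt. specialize (Hxs m Hm). lra. }
  destruct (order_automorphism_modulus F x0 (eps / 2) HF) as [d1 [Hd1 Hmod]]; [lra|].
  set (del := Rmin (Rmin d1 (eps / 2)) (Rmin r (Rmin (x0 - a) (b - x0)))).
  assert (Hdel : 0 < del /\ del <= d1 /\ del <= eps / 2 /\ del <= r /\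
                 del <= x0 - a /\ del <= b - x0).
  { unfold del, Rmin. repeat destruct Rle_dec; lra. }
  exists del. split; [lra|]. split; [lra|]. split; [lra|]. split; [lra|]. split.
  - pose proof (Hmod (x0 + del) ltac:(lra)). pose proof (Hmod (x0 - del) ltac:(lra)). lra.
  - intros m Hm. specialize (Hrm m Hm). simpl in Hrm.
    destruct (Rle_dec (xs m) x0).
    + rewrite Rabs_left1 in Hrm by lra. left; lra.
    + rewrite Rabs_right in Hrm by lra. right; lra.
Qed.

Section LimitOfPerturbations.

Variable F : nat -> R -> R.
Hypothesis F_incr : forall n, strict_increasing (F n).
Hypothesis F_cont : forall n, continuity (F n).
Hypothesis F_close : forall n u, Rabs (F (S n) u - F n u) <= half_pow n.
Hypothesis F_shift :
  forall n u, F n (u - half_pow n) <= F (S n) u <= F n (u + half_pow n).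

Lemma tail_close n j u :
  Rabs (F (n + j) u - F n u) <= 2 * half_pow n - 2 * half_pow (n + j).
Proof.
  induction j as [|j IH].
  - rewrite Nat.add_0_r, Rminus_diag, Rabs_R0. lra.
  - rewrite Nat.add_succ_r, half_pow_S. apply Rabs_le.
    apply Rabs_le_between in IH. pose proof (Rabs_le_between _ _ (F_close (n + j) u)). lra.
Qed.

Lemma tail_shift n j u :
  F n (u - 2 * half_pow n + 2 * half_pow (n + j)) <= F (n + j) u <=
  F n (u + 2 * half_pow n - 2 * half_pow (n + j)).
Proof.
  revert u. induction j as [|j IH]; intros u.
  - rewrite Nat.add_0_r. replace (u - 2 * half_pow n + 2 * half_pow n) with u by ring.
    replace (u + 2 * half_pow n - 2 * half_pow n) with u by ring. lra.
  - rewrite Nat.add_succ_r, half_pow_S.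
    destruct (F_shift (n + j) u) as [Hlo Hhi].
    destruct (IH (u - half_pow (n + j))) as [Hlo' _].
    destruct (IH (u + half_pow (n + j))) as [_ Hhi'].
    replace (u - 2 * half_pow n + 2 * (half_pow (n + j) / 2))
      with (u - half_pow (n + j) - 2 * half_pow n + 2 * half_pow (n + j)) by field.
    replace (u + 2 * half_pow n - 2 * (half_pow (n + j) / 2))
      with (u + half_pow (n + j) + 2 * half_pow n - 2 * half_pow (n + j)) by field.
    lra.
Qed.

Lemma pointwise_cauchy u : Cauchy_crit (fun n => F n u).
Proof.
  intros eps He. destruct (half_pow_eventually_lt (eps / 4)) as [N HN]; [lra|].
  exists N. intros n m Hn Hm. unfold Rdist.
  pose proof (Rabs_le_between _ _ (tail_close N (n - N) u)) as h1.
  pose proof (Rabs_le_between _ _ (tail_close N (m - N) u)) as h2.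
  replace (N + (n - N))%nat with n in h1 by lia.
  replace (N + (m - N))%nat with m in h2 by lia.
  pose proof (HN N (le_n N)). pose proof (half_pow_pos n). pose proof (half_pow_pos m).
  apply Rabs_def1; lra.
Qed.

Definition limit_fun (u : R) : R := proj1_sig (R_complete _ (pointwise_cauchy u)).

Lemma limit_fun_cv u : Un_cv (fun n => F n u) (limit_fun u).
Proof. exact (proj2_sig (R_complete _ (pointwise_cauchy u))). Qed.

Lemma limit_fun_close n u : Rabs (limit_fun u - F n u) <= 2 * half_pow n.
Proof.
  apply Rabs_le.
  enough (F n u - 2 * half_pow n <= limit_fun u <= F n u + 2 * half_pow n) by lra.
  apply (Un_cv_between _ _ _ _ n (limit_fun_cv u)). intros k Hk.
  pose proof (Rabs_le_between _ _ (tail_close n (k - n) u)) as h.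
  replace (n + (k - n))%nat with k in h by lia.
  pose proof (half_pow_pos k). lra.
Qed.

Lemma limit_fun_shift n u :
  F n (u - 2 * half_pow n) <= limit_fun u <= F n (u + 2 * half_pow n).
Proof.
  apply (Un_cv_between _ _ _ _ n (limit_fun_cv u)). intros k Hk.
  destruct (tail_shift n (k - n) u) as [hlo hhi].
  replace (n + (k - n))%nat with k in hlo, hhi by lia.
  pose proof (half_pow_pos k).
  pose proof (strict_increasing_increasing _ (F_incr n)) as Hmono.
  split; [eapply Rle_trans; [|exact hlo] | eapply Rle_trans; [exact hhi|]];
    apply Hmono; lra.
Qed.

Lemma limit_fun_strict_increasing : strict_increasing limit_fun.
Proof.
  intros s t Hst. destruct (half_pow_eventually_lt ((t - s) / 4)) as [n Hn]; [lra|].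
  specialize (Hn n (le_n n)).
  destruct (limit_fun_shift n s) as [_ Hs]. destruct (limit_fun_shift n t) as [Ht _].
  pose proof (F_incr n (s + 2 * half_pow n) (t - 2 * half_pow n) ltac:(lra)). lra.
Qed.

Lemma limit_fun_continuous : continuity limit_fun.
Proof.
  intros t. apply (CVU_continuity F limit_fun t (mkposreal 1 Rlt_0_1)).
  - intros eps He. destruct (half_pow_eventually_lt (eps / 2)) as [N HN]; [lra|].
    exists N. intros n y Hn _. pose proof (limit_fun_close n y). specialize (HN n Hn). lra.
  - intros n y _. apply F_cont.
  - unfold Boule. rewrite Rminus_diag, Rabs_R0. simpl. lra.
Qed.

Lemma limit_fun_stable N u : (forall n, (N <= n)%nat -> F n u = F N u) -> limit_fun u = F N u.
Proof.
  intros Hst.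
  enough (F N u <= limit_fun u <= F N u) by lra.
  apply (Un_cv_between _ _ _ _ N (limit_fun_cv u)). intros n Hn. rewrite (Hst n Hn); lra.
Qed.

End LimitOfPerturbations.

Lemma continuous_strict_increasing_bijection f a b c d :
  a < b -> continuity f -> strict_increasing f -> f a = c -> f b = d ->
  increasing_on (Icc a b) f /\ bijection_on (Icc a b) (Icc c d) f.
Proof.
  intros Hab Hcont Hinc Ha Hb. pose proof (strict_increasing_increasing f Hinc) as Hmono.
  split; [intros s t _ _; apply Hinc|]. split; [|split].
  - intros t [h1 h2]. split; [rewrite <- Ha | rewrite <- Hb]; apply Hmono; auto.
  - intros s t _ _ Hst. destruct (Rtotal_order s t) as [h|[h|h]]; auto;
      apply Hinc in h; lra.
  - intros z [h1 h2].
    destruct (Rle_lt_or_eq_dec c z h1) as [z1 | <-]; [|exists a; split; [split|]; lra].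
    destruct (Rle_lt_or_eq_dec z d h2) as [z2 | ->]; [|exists b; split; [split|]; lra].
    destruct (IVT (f - fct_cte z)%F a b) as [t [Ht Hz]]; auto.
    + apply continuity_minus; auto. apply continuity_const. intros p q; reflexivity.
    + unfold minus_fct, fct_cte; lra.
    + unfold minus_fct, fct_cte; lra.
    + exists t. split; [exact Ht|]. unfold minus_fct, fct_cte in Hz; lra.
Qed.

Section Construction.

Variables (a b c d : R) (x : nat -> R) (A : nat -> R -> Prop).
Hypothesis Hab : a < b.
Hypothesis Hcd : c < d.
Hypothesis Hx : forall n, a < x n < b.
Hypothesis Hdist : forall n m, n <> m -> x n <> x m.
Hypothesis Hdense : forall n, dense_in (A n) (Icc c d).

Definition normalized (F : R -> R) : Prop := order_automorphism F /\ F a = c /\ F b = d.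

Definition refines (n : nat) (F G : R -> R) : Prop :=
  exists p q, p < q /\ q - p <= half_pow n /\ F q - F p <= half_pow n /\
    agree_off p q F G /\ (forall m, (m < n)%nat -> x m <= p \/ q <= x m) /\
    A n (G (x n)).

Lemma refine_step n F : normalized F -> exists G, normalized G /\ refines n F G.
Proof.
  intros [HF [Ha Hb]]. pose proof (strict_increasing_increasing F (proj1 HF)) as Hmono.
  destruct (isolating_window F a b x n (x n) (half_pow n) HF (Hx n))
    as [del [Hdel [Hpa [Hqb [Hlen [Hosc Hsep]]]]]];
    [intros m Hm; apply Hdist; lia | apply half_pow_pos |].
  set (p := x n - del) in *. set (q := x n + del) in *.
  assert (HFp : F p < F (x n)) by (apply HF; unfold p; lra).
  assert (HFq : F (x n) < F q) by (apply HF; unfold q; lra).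
  assert (HJ : Icc c d (F (x n))).
  { split; [rewrite <- Ha | rewrite <- Hb]; apply Hmono; unfold p, q in *; lra. }
  destruct (Hdense n (F (x n)) HJ (Rmin (F (x n) - F p) (F q - F (x n))))
    as [y [HAy Hy]]; [apply Rmin_pos; lra|].
  apply Rabs_def2 in Hy.
  pose proof (Rmin_l (F (x n) - F p) (F q - F (x n))).
  pose proof (Rmin_r (F (x n) - F p) (F q - F (x n))).
  set (B := bump (F p) (F (x n)) y (F q)).
  assert (HB : order_automorphism B) by (apply bump_order_automorphism; lra).
  assert (Hag : agree_off p q F (fun t => B (F t))).
  { intros t [Ht|Ht]; apply bump_out; try lra; [left | right]; apply Hmono; exact Ht. }
  exists (fun t => B (F t)). split; [split; [|split]|].
  - apply order_automorphism_comp; assumption.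
  - rewrite Hag by (left; unfold p in *; lra). exact Ha.
  - rewrite Hag by (right; unfold q in *; lra). exact Hb.
  - exists p, q. unfold p, q in *. repeat split; auto; try lra.
    unfold B. rewrite bump_center by lra. exact HAy.
Qed.

Lemma refining_sequence :
  exists F : nat -> R -> R, (forall n, normalized (F n)) /\ (forall n, refines n (F n) (F (S n))).
Proof.
  apply dependent_choice_nat with (x0 := affine a c b d); [|exact refine_step].
  split; [apply affine_order_automorphism; lra|]. split; [apply affine_l | apply affine_r; lra].
Qed.

Lemma refines_close n F G :
  strict_increasing F -> strict_increasing G -> refines n F G ->
  forall u, Rabs (G u - F u) <= half_pow n.
Proof.
  intros HF HG [p [q [Hpq [_ [Hosc [Hag _]]]]]] u.
  eapply Rle_trans; [|exact Hosc].
  apply agree_off_close; auto using strict_increasing_increasing; lra.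
Qed.

Lemma refines_shift n F G :
  strict_increasing F -> strict_increasing G -> refines n F G ->
  forall u, F (u - half_pow n) <= G u <= F (u + half_pow n).
Proof.
  intros HF HG [p [q [Hpq [Hlen [_ [Hag _]]]]]] u.
  pose proof (strict_increasing_increasing F HF) as Hmono.
  destruct (agree_off_shift p q F G) with (u := u) as [Hlo Hhi];
    auto using strict_increasing_increasing; [lra|].
  split; [eapply Rle_trans; [|exact Hlo] | eapply Rle_trans; [exact Hhi|]]; apply Hmono; lra.
Qed.

Lemma refined_values_frozen (F : nat -> R -> R) :
  (forall n, refines n (F n) (F (S n))) ->
  forall m k, (S m <= k)%nat -> F k (x m) = F (S m) (x m).
Proof.
  intros HR m k Hk. induction Hk as [|k Hk IH]; [reflexivity|].
  destruct (HR k) as [p [q [_ [_ [_ [Hag [Hsep _]]]]]]].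
  rewrite Hag by (apply Hsep; lia). exact IH.
Qed.

End Construction.

Theorem lemma2p4 (a b c d : R) (x : nat -> R) (A : nat -> R -> Prop) :
  a < b -> c < d ->
  (forall n, a < x n < b) ->
  (forall n m, n <> m -> x n <> x m) ->
  (forall n y, A n y -> Icc c d y) ->
  (forall n, dense_in (A n) (Icc c d)) ->
  exists f : R -> R,
    increasing_on (Icc a b) f /\ bijection_on (Icc a b) (Icc c d) f /\
    (forall n, A n (f (x n))).
Proof.
  (* [A n] need not lie inside [c, d]: only its density there is used. *)
  intros Hab Hcd Hx Hdist _ Hdense.
  destruct (refining_sequence a b c d x A Hab Hcd Hx Hdist Hdense) as [F [HN HR]].
  assert (Hinc : forall n, strict_increasing (F n)) by (intro n; apply HN).
  assert (Hcont : forall n, continuity (F n))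
    by (intro n; apply order_automorphism_continuous, HN).
  assert (Hclose : forall n u, Rabs (F (S n) u - F n u) <= half_pow n)
    by (intro n; apply (refines_close x A); auto).
  assert (Hshift : forall n u, F n (u - half_pow n) <= F (S n) u <= F n (u + half_pow n))
    by (intro n; apply (refines_shift x A); auto).
  set (f := limit_fun F Hclose).
  assert (Hconst : forall u e, (forall n, F n u = e) -> f u = e).
  { intros u e He. rewrite <- (He O). apply limit_fun_stable. intros; rewrite !He; reflexivity. }
  destruct (continuous_strict_increasing_bijection f a b c d) as [Hf_incr Hf_bij]; auto.
  - apply limit_fun_continuous; assumption.
  - apply limit_fun_strict_increasing; assumption.
  - apply Hconst. intro n; apply HN.
  - apply Hconst. intro n; apply HN.
  - exists f. split; [exact Hf_incr|]. split; [exact Hf_bij|].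
    intro m. unfold f. rewrite (limit_fun_stable F Hclose (S m) (x m)).
    + destruct (HR m) as [p [q [_ [_ [_ [_ [_ HA]]]]]]]. exact HA.
    + intros k Hk. apply (refined_values_frozen x A F HR); lia.
Qed.
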